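(* Let $V$ be a finite set with positive element weights ($\vert A \vert$ = total weight of $A \subseteq V$), let $\mathcal{P}, \mathcal{P}'$ be partitions of $V$ into nonempty parts, and let $P_i', P_j' \in \mathcal{P}'$ be distinct. For $\mathcal{S} \subseteq \mathcal{P}$ define $$\phi^*_{i',j'}(\mathcal{S}) := \vert U_{\mathcal{S}} \cap P_j' \vert + \vert P_i' \vert - \vert U_{\mathcal{S}} \cap P_i' \vert + \sum_{P' \in \mathcal{P}' \setminus \{P_i', P_j'\}} \vert P' \vert \operatorname{peak}\Big(\frac{\vert U_{\mathcal{S}} \cap P' \vert}{\vert P' \vert}\Big).$$ Let $\mathcal{S}$ minimize $\phi^*_{i',j'}$ over all $\emptyset \ne \mathcal{S} \subsetneq \mathcal{P}$, and set $\mathcal{S}' := \{P_i'\} \cup \{P' \in \mathcal{P}' \setminus \{P_i', P_j'\} : \vert U_{\mathcal{S}} \cap P' \vert > \vert P' \vert/2\}$. Then $(\mathcal{S}, \mathcal{S}')$ is an optimal $C_{\wedge}$-correspondence under the constraint $P_i' \in \mathcal{S}'$ and $P_j' \in \mathcal{P}' \setminus \mathcal{S}'$, i.e. it minimizes $\vert U_{\mathcal{S}} \triangle U_{\mathcal{S}'} \vert$ among all pairs with $\emptyset \ne \mathcal{S} \subsetneq \mathcal{P}$, $\mathcal{S}' \subseteq \mathcal{P}'$, $P_i' \in \mathcal{S}'$, $P_j' \notin \mathcal{S}'$.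
   Context: $U_{\mathcal{S}}$ denotes the union of the sets in $\mathcal{S}$; $\triangle$ is symmetric difference; $\operatorname{peak}(x) = x$ for $x \le 1/2$ and $1 - x$ for $x > 1/2$. A $C_{\wedge}$-correspondence is a pair $(\mathcal{S}, \mathcal{S}')$ with $\mathcal{S} \subseteq \mathcal{P}$, $\mathcal{S}' \subseteq \mathcal{P}'$, $\mathcal{S} \notin \{\emptyset, \mathcal{P}\}$ and $\mathcal{S}' \notin \{\emptyset, \mathcal{P}'\}$ (automatic under the constraint above). *)

From mathcomp Require Import all_boot all_order all_algebra.
Set Implicit Arguments. Unset Strict Implicit. Unset Printing Implicit Defensive.
Import Order.TTheory GRing.Theory Num.Theory.
Local Open Scope ring_scope.

Definition wt (R : realFieldType) (V : finType) (w : V -> R) (A : {set V}) : R :=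
  \sum_(x in A) w x.

Definition peak (R : realFieldType) (x : R) : R :=
  if x <= 2^-1 then x else 1 - x.

Definition nonempty_partition (V : finType) (P : {set {set V}}) : Prop :=
  partition P [set: V] /\ set0 \notin P.

Definition phi_star (R : realFieldType) (V : finType) (w : V -> R)
  (P' : {set {set V}}) (Pi Pj : {set V}) (S : {set {set V}}) : R :=
  let U := cover S in
  wt w (U :&: Pj) + wt w Pi - wt w (U :&: Pi)
  + \sum_(Q in P' :\ Pi :\ Pj) wt w Q * peak (wt w (U :&: Q) / wt w Q).

Definition induced_S' (R : realFieldType) (V : finType) (w : V -> R)
  (P' : {set {set V}}) (Pi Pj : {set V}) (S : {set {set V}}) : {set {set V}} :=
  Pi |: [set Q in P' :\ Pi :\ Pj | wt w Q / 2%:R < wt w (cover S :&: Q)].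

Definition admissible (V : finType) (P P' : {set {set V}}) (Pi Pj : {set V})
  (T T' : {set {set V}}) : Prop :=
  [/\ T \subset P, T != set0, T != P, T' \subset P' & (Pi \in T') && (Pj \notin T')].

Definition symdiff (V : finType) (A B : {set V}) : {set V} := (A :\: B) :|: (B :\: A).

From mathcomp Require Import all_boot all_order all_algebra.
From mathcomp Require Import lra.

Set Implicit Arguments.
Unset Strict Implicit.
Unset Printing Implicit Defensive.
Import Order.TTheory GRing.Theory Num.Theory.
Local Open Scope ring_scope.

(* The cost |U_T (sym. diff.) U_T'| splits over the parts Q of P': Q contributes
   |Q| - |U_T & Q| if Q is in T' and |U_T & Q| otherwise. For Q other than
   P_i', P_j' the cheaper of the two choices is |Q| peak(|U_T & Q| / |Q|), and
   it is attained by the majority rule defining S'. Hence the cost of any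
   admissible (T, T') is at least phi*(T) >= phi*(S), which is exactly the
   cost of (S, S'). *)

Lemma mulr_peak_majority (R : realFieldType) (q a : R) :
  0 < q -> q * peak (a / q) = (if q / 2%:R < a then q - a else a).
Proof.
move=> q_gt0; have aqK : q * (a / q) = a by rewrite mulrCA divff ?mulr1 ?gt_eqF.
rewrite /peak ler_pdivrMr // [2^-1 * _]mulrC ltNge.
by case: ifP => _; rewrite ?mulrBr ?mulr1 aqK.
Qed.

Lemma mulr_peak_le (R : realFieldType) (q a : R) (b : bool) :
  0 < q -> q * peak (a / q) <= (if b then q - a else a).
Proof.
move=> q_gt0; rewrite mulr_peak_majority //.
by case: ltrP => h; case: b => //; lra.
Qed.

Section Weights.
Variables (R : realFieldType) (V : finType) (w : V -> R).
Hypothesis w_gt0 : forall x, 0 < w x.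

Lemma wt_gt0 (A : {set V}) : A != set0 -> 0 < wt w A.
Proof.
case/set0Pn => x xA; rewrite /wt (bigD1 x) //=.
by rewrite ltr_pwDl // sumr_ge0 // => y _; apply: ltW.
Qed.

Lemma wt_setDl (A B : {set V}) : wt w (B :\: A) = wt w B - wt w (A :&: B).
Proof. by rewrite /wt [X in _ = X - _](big_setID A) /= setIC addrC addrK. Qed.

Lemma wt_partition (P' : {set {set V}}) (A : {set V}) :
  partition P' [set: V] -> wt w A = \sum_(Q in P') wt w (A :&: Q).
Proof.
case/and3P => /eqP covP' trivP' _; rewrite /wt big_mkcond /=.
rewrite (eq_bigl (mem (cover P'))) => [|x]; last by rewrite covP' !inE.
rewrite big_trivIset //; apply: eq_bigr => Q _.
by rewrite -big_mkcondr; apply: eq_bigl => x; rewrite inE andbC.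
Qed.

Lemma symdiff_cover_setI (P' T' : {set {set V}}) (U Q : {set V}) :
  trivIset P' -> T' \subset P' -> Q \in P' ->
  symdiff U (cover T') :&: Q = if Q \in T' then Q :\: U else U :&: Q.
Proof.
move=> trivP' sT'P' QP'; apply/setP => x; rewrite /symdiff !inE.
case xQ: (x \in Q); last by case: ifP; rewrite !inE xQ !andbF.
have -> : (x \in cover T') = (Q \in T').
  apply/bigcupP/idP => [[Q2 Q2T' xQ2]|QT']; last by exists Q.
  have Q2P' := subsetP sT'P' _ Q2T'.
  by rewrite -(def_pblock trivP' QP' xQ) (def_pblock trivP' Q2P' xQ2).
by case: (Q \in T'); rewrite !inE xQ ?andbT; case: (x \in U).
Qed.

Lemma wt_symdiff_cover (P' T' : {set {set V}}) (U : {set V}) :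
  partition P' [set: V] -> T' \subset P' ->
  wt w (symdiff U (cover T')) =
    \sum_(Q in P') (if Q \in T' then wt w Q - wt w (U :&: Q) else wt w (U :&: Q)).
Proof.
move=> partP' sT'P'; rewrite (wt_partition _ partP'); apply: eq_bigr => Q QP'.
case/and3P: partP' => _ trivP' _; rewrite (symdiff_cover_setI _ trivP') //.
by case: ifP => _; rewrite ?wt_setDl.
Qed.

Variables (P' : {set {set V}}) (Pi Pj : {set V}).
Hypotheses (partP' : partition P' [set: V]) (P'_nonempty : set0 \notin P').
Hypotheses (PiP' : Pi \in P') (PjP' : Pj \in P') (Pi_neq_Pj : Pi != Pj).

Lemma wt_part_gt0 (Q : {set V}) : Q \in P' -> 0 < wt w Q.
Proof. by move=> QP'; apply: wt_gt0; apply: contraNneq P'_nonempty => <-. Qed.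

Lemma wt_symdiff_cover_split (U : {set V}) (T' : {set {set V}}) :
  T' \subset P' -> Pi \in T' -> Pj \notin T' ->
  wt w (symdiff U (cover T')) =
    wt w (U :&: Pj) + wt w Pi - wt w (U :&: Pi)
    + \sum_(Q in P' :\ Pi :\ Pj)
        (if Q \in T' then wt w Q - wt w (U :&: Q) else wt w (U :&: Q)).
Proof.
move=> sT'P' PiT' PjT'; rewrite (wt_symdiff_cover _ partP') // (bigD1 Pi) //=.
rewrite (bigD1 Pj) /=; last by rewrite PjP' eq_sym.
rewrite PiT' (negbTE PjT') addrCA !addrA; congr (_ + _).
apply: eq_bigl => Q; rewrite !inE.
by case: (Q \in P'); case: (Q != Pi); case: (Q != Pj).
Qed.

Lemma phi_star_le_symdiff (T T' : {set {set V}}) :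
  T' \subset P' -> Pi \in T' -> Pj \notin T' ->
  phi_star w P' Pi Pj T <= wt w (symdiff (cover T) (cover T')).
Proof.
move=> sT'P' PiT' PjT'; rewrite wt_symdiff_cover_split // /phi_star lerD2l.
apply: ler_sum => Q; rewrite !inE => /and3P [_ _ QP'].
by apply: mulr_peak_le; apply: wt_part_gt0.
Qed.

Lemma induced_S'_subset (S : {set {set V}}) : induced_S' w P' Pi Pj S \subset P'.
Proof.
by apply/subsetP => Q; rewrite !inE => /predU1P [->|/andP [/and3P [_ _ ->]]].
Qed.

Lemma mem_induced_S' (S : {set {set V}}) :
  (Pi \in induced_S' w P' Pi Pj S) && (Pj \notin induced_S' w P' Pi Pj S).
Proof. by rewrite !inE !eqxx [Pj == Pi]eq_sym (negbTE Pi_neq_Pj). Qed.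

Lemma phi_star_induced_S' (S : {set {set V}}) :
  phi_star w P' Pi Pj S =
    wt w (symdiff (cover S) (cover (induced_S' w P' Pi Pj S))).
Proof.
have /andP [PiS' PjS'] := mem_induced_S' S.
rewrite wt_symdiff_cover_split ?induced_S'_subset //; congr (_ + _).
apply: eq_bigr => Q QP'; have /setD1P [_ /setD1P [QPi QP'']] := QP'.
by rewrite /induced_S' in_setU1 (negbTE QPi) inE QP' mulr_peak_majority ?wt_part_gt0.
Qed.

End Weights.

Theorem proposition9 (R : realFieldType) (V : finType) (w : V -> R)
  (P P' : {set {set V}}) (Pi Pj : {set V}) (S : {set {set V}}) :
  (forall x, 0 < w x) ->
  nonempty_partition P -> nonempty_partition P' ->
  Pi \in P' -> Pj \in P' -> Pi != Pj ->
  S \subset P -> S != set0 -> S != P ->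
  (forall T : {set {set V}}, T \subset P -> T != set0 -> T != P ->
     phi_star w P' Pi Pj S <= phi_star w P' Pi Pj T) ->
  admissible P P' Pi Pj S (induced_S' w P' Pi Pj S) /\
  (forall T T' : {set {set V}}, admissible P P' Pi Pj T T' ->
     wt w (symdiff (cover S) (cover (induced_S' w P' Pi Pj S)))
       <= wt w (symdiff (cover T) (cover T'))).
Proof.
move=> w_gt0 _ [partP' P'_nonempty] PiP' PjP' Pi_neq_Pj sSP S_neq0 S_neqP S_opt.
split; first by split; rewrite ?induced_S'_subset ?mem_induced_S'.
move=> T T' [sTP T_neq0 T_neqP sT'P' /andP [PiT' PjT']].
rewrite -phi_star_induced_S' //; apply: le_trans (S_opt T sTP T_neq0 T_neqP) _.
exact: phi_star_le_symdiff.
Qed.
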